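(* Let $(X,\kappa)$ be a digital image and let $m$ be a positive integer. Then $(X,\kappa)$ has both the digital fixed point property with respect to $[0,m]_{\mathbb{Z}}$ and the digital homotopy fixed point property if and only if $X$ is a singleton.
   Context: A digital image is a pair $(X,\kappa)$ with $X \subset \mathbb{Z}^n$ and $\kappa$ an adjacency relation on $X$. For integers $a<b$, $[a,b]_{\mathbb{Z}} = \{z \in \mathbb{Z} : a \le z \le b\}$ with $2$-adjacency (consecutive integers adjacent). A function $f:(X,\kappa)\to(Y,\lambda)$ is $(\kappa,\lambda)$-continuous if whenever $x \leftrightarrow_\kappa x'$ we have $f(x)=f(x')$ or $f(x)\leftrightarrow_\lambda f(x')$. A $\kappa$-path is a $(2,\kappa)$-continuous function $p:[0,m]_{\mathbb{Z}} \to X$. The normal product adjacency $\kappa_*$ on $X \times [0,m]_{\mathbb{Z}}$: $(x,s) \leftrightarrow_{\kappa_*} (x',s')$ iff ($x \leftrightarrow_\kappa x'$ and $s=s'$) or ($x=x'$ and $|s-s'|=1$) or ($x \leftrightarrow_\kappa x'$ and $|s-s'|=1$). For $f: X \times [0,m]_{\mathbb{Z}} \to X$ and $t \in [0,m]_{\mathbb{Z}}$, $f_t: X\to X$ is $f_t(x)=f(x,t)$. $(X,\kappa)$ has the digital fixed point property with respect to $[0,m]_{\mathbb{Z}}$ if for every $(\kappa_*,\kappa)$-continuous $f: X \times [0,m]_{\mathbb{Z}} \to X$ there is a $\kappa$-path $p:[0,m]_{\mathbb{Z}} \to X$ with $f_t(p(t)) = p(t)$ for all $t$. A digital homotopy is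 a function $F: X \times [0,m]_{\mathbb{Z}} \to X$ ($m \in \mathbb{N}$) such that each $F_t$ is $(\kappa,\kappa)$-continuous and each $t \mapsto F(x,t)$ is $(2,\kappa)$-continuous. $(X,\kappa)$ has the digital homotopy fixed point property if for every digital homotopy $F: X \times [0,m]_{\mathbb{Z}} \to X$ (any $m$) there is a $\kappa$-path $p:[0,m]_{\mathbb{Z}}\to X$ with $F_t(p(t))=p(t)$ for all $t \in [0,m]_{\mathbb{Z}}$. *)

From mathcomp Require Import all_boot all_order all_algebra.
Set Implicit Arguments. Unset Strict Implicit. Unset Printing Implicit Defensive.

Definition pt (n : nat) := 'rV[int]_n.

Definition adjacency_on (n : nat) (X : pt n -> Prop) (kappa : pt n -> pt n -> Prop) : Prop :=
  (forall x y, X x -> X y -> kappa x y -> kappa y x) /\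
  (forall x, X x -> ~ kappa x x).

Definition eq_or_adj (n : nat) (kappa : pt n -> pt n -> Prop) (a b : pt n) : Prop :=
  a = b \/ kappa a b.

(* A kappa-path p : [0,m]_Z -> X, i.e. a (2,kappa)-continuous map. *)
Definition kpath (n : nat) (X : pt n -> Prop) (kappa : pt n -> pt n -> Prop)
    (m : nat) (p : nat -> pt n) : Prop :=
  (forall t, t <= m -> X (p t)) /\
  (forall t, t < m -> eq_or_adj kappa (p t) (p t.+1)).

Definition maps_into (n : nat) (X : pt n -> Prop) (m : nat) (f : pt n -> nat -> pt n) : Prop :=
  forall x t, X x -> t <= m -> X (f x t).

Definition normal_prod_adj (n : nat) (kappa : pt n -> pt n -> Prop)
    (x : pt n) (s : nat) (x' : pt n) (s' : nat) : Prop :=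
  (kappa x x' /\ s = s') \/
  (x = x' /\ (s = s'.+1 \/ s' = s.+1)) \/
  (kappa x x' /\ (s = s'.+1 \/ s' = s.+1)).

Definition prod_continuous (n : nat) (X : pt n -> Prop) (kappa : pt n -> pt n -> Prop)
    (m : nat) (f : pt n -> nat -> pt n) : Prop :=
  maps_into X m f /\
  forall x s x' s', X x -> X x' -> s <= m -> s' <= m ->
    normal_prod_adj kappa x s x' s' -> eq_or_adj kappa (f x s) (f x' s').

Definition has_fixed_path (n : nat) (X : pt n -> Prop) (kappa : pt n -> pt n -> Prop)
    (m : nat) (f : pt n -> nat -> pt n) : Prop :=
  exists p : nat -> pt n, kpath X kappa m p /\ forall t, t <= m -> f (p t) t = p t.

Definition DFPP_wrt (n : nat) (X : pt n -> Prop) (kappa : pt n -> pt n -> Prop) (m : nat) : Prop :=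
  forall f : pt n -> nat -> pt n, prod_continuous X kappa m f -> has_fixed_path X kappa m f.

Definition digital_homotopy (n : nat) (X : pt n -> Prop) (kappa : pt n -> pt n -> Prop)
    (m : nat) (F : pt n -> nat -> pt n) : Prop :=
  maps_into X m F /\
  (forall t, t <= m -> forall x y, X x -> X y -> kappa x y -> eq_or_adj kappa (F x t) (F y t)) /\
  (forall x, X x -> forall t, t < m -> eq_or_adj kappa (F x t) (F x t.+1)).

Definition DHFPP (n : nat) (X : pt n -> Prop) (kappa : pt n -> pt n -> Prop) : Prop :=
  forall (m : nat), 0 < m -> forall F : pt n -> nat -> pt n,
    digital_homotopy X kappa m F -> has_fixed_path X kappa m F.

Definition is_singleton (n : nat) (X : pt n -> Prop) : Prop :=
  exists x0 : pt n, forall x, X x <-> x = x0.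

From mathcomp Require Import all_boot all_order all_algebra.
From Stdlib Require Import Classical.

Set Implicit Arguments.
Unset Strict Implicit.
Unset Printing Implicit Defensive.

(* A digital image with at least two points has a continuous self-map without fixed
   points: send a point x0 to a neighbour (or, if x0 is isolated, to any other
   point) and everything else to x0.  Read as a time-independent map on
   X x [0,m], it admits no fixed path, so the digital fixed point property
   with respect to [0,m] alone forces X to be a singleton; nonemptiness comes
   from the fixed path of the identity. *)

Section DigitalSelfMaps.

Variables (n : nat) (X : pt n -> Prop) (kappa : pt n -> pt n -> Prop).

Definition maps_to_self (g : pt n -> pt n) : Prop := forall x, X x -> X (g x).

Definition self_continuous (g : pt n -> pt n) : Prop :=
  forall a b, X a -> X b -> kappa a b -> eq_or_adj kappa (g a) (g b).

Lemma id_self_continuous : self_continuous id.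
Proof. by move=> a b _ _ kab; right. Qed.

Lemma const_prod_continuous (m : nat) (g : pt n -> pt n) :
  maps_to_self g -> self_continuous g -> prod_continuous X kappa m (fun x _ => g x).
Proof.
move=> gX gc; split=> [x t Xx _|x s x' s' Xx Xx' _ _]; first exact: gX.
by case=> [[kxx' _]|[[<- _]|[kxx' _]]]; [exact: gc | left | exact: gc].
Qed.

Lemma DFPP_wrt_fixed_point (m : nat) (g : pt n -> pt n) :
  DFPP_wrt X kappa m -> maps_to_self g -> self_continuous g ->
  exists2 x, X x & g x = x.
Proof.
move=> D gX gc; have [p [[pX _] pfix]] := D _ (const_prod_continuous m gX gc).
by exists (p 0); [exact: pX | exact: pfix].
Qed.

Lemma singleton_has_fixed_path (m : nat) (f : pt n -> nat -> pt n) :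
  is_singleton X -> maps_into X m f -> has_fixed_path X kappa m f.
Proof.
move=> [x0 X_x0] fX; have Xx0 : X x0 by apply/X_x0.
exists (fun _ => x0); split; first by split=> t _; [|left].
by move=> t tm; apply/X_x0; exact: fX.
Qed.

Hypothesis hkappa : adjacency_on X kappa.

Section PointSwap.

Variables x0 x1 : pt n.
Hypotheses (Xx0 : X x0) (Xx1 : X x1).
Hypothesis x0_target : kappa x0 x1 \/ ~ (exists y, X y /\ kappa x0 y).

Definition point_swap (x : pt n) : pt n := if x == x0 then x1 else x0.

Lemma point_swap_maps_to_self : maps_to_self point_swap.
Proof. by move=> x _; rewrite /point_swap; case: (x == x0). Qed.

Lemma point_swap_self_continuous : self_continuous point_swap.
Proof.
have [ksym _] := hkappa.
move=> a b Xa Xb kab; rewrite /point_swap /eq_or_adj.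
case: (eqVneq a x0) => [ea|_]; case: (eqVneq b x0) => [eb|_]; try by left.
- case: x0_target => [k01|isolated]; first by right; exact: ksym.
  by exfalso; apply: isolated; exists b; rewrite -ea.
- case: x0_target => [k01|isolated]; first by right.
  by exfalso; apply: isolated; exists a; rewrite -eb; split=> //; exact: ksym.
Qed.

Lemma point_swap_fixpoint_free x : x1 <> x0 -> point_swap x <> x.
Proof.
by rewrite /point_swap; case: (eqVneq x x0) => [-> //|nx0 _ e]; rewrite e eqxx in nx0.
Qed.

End PointSwap.

Lemma fixpoint_free_self_map x0 :
  X x0 -> ~ is_singleton X ->
  exists g, [/\ maps_to_self g, self_continuous g & forall x, g x <> x].
Proof.
move=> Xx0 not_single.
have [x1 [Xx1 x10]] : exists x1, X x1 /\ x1 <> x0.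
  apply: NNPP => none; apply: not_single; exists x0 => x; split=> [Xx|-> //].
  by apply: NNPP => nx; apply: none; exists x.
have swap_ok y : X y -> y <> x0 -> kappa x0 y \/ ~ (exists z, X z /\ kappa x0 z) ->
    exists g, [/\ maps_to_self g, self_continuous g & forall x, g x <> x].
  move=> Xy yx0 target; exists (point_swap x0 y); split.
  - exact: point_swap_maps_to_self.
  - exact: point_swap_self_continuous.
  - by move=> x; exact: point_swap_fixpoint_free.
have [[y [Xy k0y]]|isolated] := classic (exists y, X y /\ kappa x0 y).
- apply: (swap_ok y Xy) => [e|]; last by left.
  by subst y; exact: (proj2 hkappa x0 Xx0 k0y).
- exact: swap_ok Xx1 x10 (or_intror isolated).
Qed.

Lemma DFPP_wrt_singleton (m : nat) : DFPP_wrt X kappa m -> is_singleton X.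
Proof.
move=> D; have [x0 Xx0 _] := DFPP_wrt_fixed_point (g := id) D (fun _ Xx => Xx) id_self_continuous.
apply: NNPP => not_single.
have [g [gX gc gfree]] := fixpoint_free_self_map Xx0 not_single.
by have [x _ gx] := DFPP_wrt_fixed_point D gX gc; exact: gfree gx.
Qed.

End DigitalSelfMaps.

Theorem mainTheorem3 (n : nat) (X : pt n -> Prop) (kappa : pt n -> pt n -> Prop)
  (hkappa : adjacency_on X kappa) (m : nat) (hm : 0 < m) :
  (DFPP_wrt X kappa m /\ DHFPP X kappa) <-> is_singleton X.
Proof.
split=> [[D _]|single]; first exact: DFPP_wrt_singleton D.
split=> [f [fX _]|m' _ F [FX _]]; exact: singleton_has_fixed_path.
Qed.
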